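(* Let $G$ be a directed graph on $n$ vertices, $l\ge 1$ an integer, and $w$ a weight function such that $G_w$ is min-unique for paths of length at most $l$. Then for every pair of vertices $u,v$, $|\mathcal{P}^{2l}_w(u,v)| \le n$. Consequently, the total number of paths in $\bigcup_{u,v}\mathcal{P}^{2l}_w(u,v)$ is at most $n^3$.
   Context: A weight function on a directed graph $G=(V,E)$ is a map $w:E\to\mathbb{N}_{>0}$. $G_w$ denotes $G$ weighted by $w$; the weight $w(P)$ of a path $P$ is the sum of the weights of its edges, and the length $\mathrm{len}(P)$ is its number of edges. For vertices $u,v$ and integer $i\ge 0$, let $\mathcal{P}^i_w(u,v)$ be the set of paths from $u$ to $v$ of length at most $i$ that have minimum weight among all paths from $u$ to $v$ of length at most $i$. $G_w$ is min-unique for paths of length at most $i$ if $|\mathcal{P}^i_w(u,v)|\le 1$ for every pair of vertices $u,v$. *)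

From mathcomp Require Import all_boot.
Set Implicit Arguments. Unset Strict Implicit. Unset Printing Implicit Defensive.

(* A weight function is w : V -> V -> nat, required positive on edges
   (its values on non-edges are irrelevant).
   A path is represented by its full vertex sequence [:: x0; x1; ...; xk]
   (k = its length = number of edges), with consecutive vertices joined by
   edges and no repeated vertex (simple path). *)

Definition is_path (V : eqType) (E : rel V) (u v : V) (q : seq V) : bool :=
  match q with
  | [::] => false
  | x :: t => [&& x == u, path E x t, last x t == v & uniq q]
  end.

Definition plen (V : Type) (q : seq V) : nat := (size q).-1.

Fixpoint wt_from (V : Type) (w : V -> V -> nat) (x : V) (t : seq V) : nat :=
  match t with
  | [::] => 0
  | y :: t' => w x y + wt_from w y t'
  end.

Definition pweight (V : Type) (w : V -> V -> nat) (q : seq V) : nat :=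
  match q with
  | [::] => 0
  | x :: t => wt_from w x t
  end.

Definition minpath (V : eqType) (E : rel V) (w : V -> V -> nat) (i : nat)
    (u v : V) (q : seq V) : Prop :=
  [/\ is_path E u v q, plen q <= i &
      forall q', is_path E u v q' -> plen q' <= i -> pweight w q <= pweight w q'].

Definition min_unique (V : eqType) (E : rel V) (w : V -> V -> nat) (i : nat) : Prop :=
  forall u v q1 q2, minpath E w i u v q1 -> minpath E w i u v q2 -> q1 = q2.

(* |S| <= k for a (possibly infinite a priori) set S of vertex sequences:
   every duplicate-free list of members of S has at most k entries. *)
Definition card_le (V : eqType) (S : seq V -> Prop) (k : nat) : Prop :=
  forall s : seq (seq V), uniq s -> (forall q, q \in s -> S q) -> size s <= k.

(* A minimum-weight path of length at most 2l splits, after min(l, len) edges,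
   into two halves of length at most l, and each half is a minimum-weight path
   of length at most l: otherwise replacing it would give a lighter walk of
   length at most 2l, which loop removal turns into a lighter simple path.  By
   min-uniqueness the two halves are determined by their endpoints, so the path
   is determined by (u, v, split vertex). *)

From mathcomp Require Import all_boot.
From mathcomp Require Import zify.

Set Implicit Arguments.
Unset Strict Implicit.
Unset Printing Implicit Defensive.

Section Paths.
Variables (V : eqType) (E : rel V) (w : V -> V -> nat).

Lemma wt_from_cat x p r :
  wt_from w x (p ++ r) = wt_from w x p + wt_from w (last x p) r.
Proof. by elim: p x => [|y p IHp] x //=; rewrite IHp addnA. Qed.

Lemma walk_shortcut x t : path E x t -> exists t',
  [/\ path E x t', uniq (x :: t'), last x t' = last x t,
      size t' <= size t & wt_from w x t' <= wt_from w x t].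
Proof.
elim: t x => [|y t IHt] x /=; first by exists [::].
case/andP=> Exy /IHt[t' [pt' ut' lt' st' wt']].
have [eq_xy|neq_xy] := eqVneq x y.
  by subst y; exists t'; split=> //; lia.
case xt': (x \in t'); last first.
  exists (y :: t'); split=> //=; first by rewrite Exy.
    by rewrite inE negb_or neq_xy xt'.
  by lia.
case/splitPr: xt' pt' ut' lt' st' wt' => p r pt' ut' lt' st' wt'.
exists r; split.
- by move: pt'; rewrite cat_path /= => /and3P[].
- by move: ut'; rewrite -cat_cons cat_uniq => /and3P[].
- by rewrite -lt' last_cat.
- by move: st'; rewrite size_cat /=; lia.
- by move: wt'; rewrite wt_from_cat /=; lia.
Qed.

Lemma minpath_le_walk i u v q t : minpath E w i u v q ->
  path E u t -> last u t = v -> size t <= i -> pweight w q <= wt_from w u t.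
Proof.
move=> [_ _ qmin] Eut ltv sti.
have [t' [Eut' ut' lt' st' wt']] := walk_shortcut Eut.
apply: leq_trans wt'; apply: (qmin (u :: t')); last by rewrite /plen /=; lia.
by rewrite /= eqxx Eut' lt' ltv eqxx.
Qed.

Lemma is_path_cat u v x p r : is_path E u v (x :: p ++ r) ->
  [/\ x = u, path E u p, path E (last u p) r, last (last u p) r = v
    & uniq ((u :: p) ++ r)].
Proof.
case/and4P=> /eqP xu Eupr /eqP lprv upr; subst x.
rewrite last_cat in lprv; rewrite cat_path in Eupr.
by case/andP: Eupr.
Qed.

Lemma minpath_prefix i j u v x p r : minpath E w i u v (x :: p ++ r) ->
  size p <= j -> j + size r <= i -> minpath E w j u (last u p) (u :: p).
Proof.
move=> qmin spj jri; have [qpath _ _] := qmin.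
have [xu Eup Er lrv upr] := is_path_cat qpath; subst x.
split=> [||[//|y p']].
- rewrite /= eqxx Eup eqxx; exact: subseq_uniq (prefix_subseq _ r) upr.
- by rewrite /plen.
case/and4P=> /eqP-> Eup' /eqP lp' _; rewrite /plen /= => sp'.
have := minpath_le_walk qmin (t := p' ++ r).
rewrite /= cat_path last_cat !wt_from_cat lp' Eup' Er lrv size_cat leq_add2r.
by apply=> //; lia.
Qed.

Lemma minpath_suffix i k u v x p r : minpath E w i u v (x :: p ++ r) ->
  size r <= k -> size p + k <= i -> minpath E w k (last u p) v (last u p :: r).
Proof.
move=> qmin srk pki; have [qpath _ _] := qmin.
have [xu Eup Er lrv upr] := is_path_cat qpath; subst x.
split=> [||[//|y r']].
- rewrite /= eqxx Er lrv eqxx /=.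
  move: upr; rewrite cat_uniq => /and3P[_ /hasPn disj ->].
  by rewrite andbT; apply/negP=> /disj; rewrite mem_last.
- by rewrite /plen.
case/and4P=> /eqP-> Er' /eqP lr' _; rewrite /plen /= => sr'.
have := minpath_le_walk qmin (t := p ++ r').
rewrite /= cat_path last_cat !wt_from_cat lr' Eup Er' size_cat leq_add2l.
by apply=> //; lia.
Qed.

Lemma is_path_ends d u v q : is_path E u v q -> head d q = u /\ last d q = v.
Proof. by case: q => [|x t] //= /and4P[/eqP-> _ /eqP-> _]. Qed.

(* The vertex reached after min(l, len q) edges; [d] is a junk value for the
   empty sequence, which is never a path. *)
Definition mid_vertex (l : nat) (d : V) (q : seq V) : V :=
  if q is x :: t then last x (take (minn l (size t)) t) else d.

Lemma minpath_halves l d u v q : minpath E w (2 * l) u v q -> exists p r,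
  [/\ q = u :: p ++ r, last u p = mid_vertex l d q,
       minpath E w l u (last u p) (u :: p)
     & minpath E w l (last u p) v (last u p :: r)].
Proof.
case: q => [[] //|x t] qmin; have [/and4P[/eqP xu _ _ _] qlen _] := qmin.
subst x; rewrite /plen /= in qlen.
set k := minn l (size t); rewrite -(cat_take_drop k t) in qmin *.
exists (take k t), (drop k t); split=> //.
- by rewrite /= cat_take_drop.
- by apply: minpath_prefix qmin _ _; rewrite ?size_take_min ?size_drop; lia.
- by apply: minpath_suffix qmin _ _; rewrite ?size_take_min ?size_drop; lia.
Qed.

Lemma minpath_mid_inj l d u v q1 q2 : min_unique E w l ->
  minpath E w (2 * l) u v q1 -> minpath E w (2 * l) u v q2 ->
  mid_vertex l d q1 = mid_vertex l d q2 -> q1 = q2.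
Proof.
move=> uniq_l /(minpath_halves d)[p1 [r1 [-> <- pre1 suf1]]].
move=> /(minpath_halves d)[p2 [r2 [-> <- pre2 suf2]]] mid.
rewrite mid in pre1 suf1.
by case: (uniq_l _ _ _ _ pre1 pre2) (uniq_l _ _ _ _ suf1 suf2) => -> [->].
Qed.

End Paths.

Lemma card_le_inj (V : eqType) (T : finType) (S : seq V -> Prop) (f : seq V -> T) :
  (forall q1 q2, S q1 -> S q2 -> f q1 = f q2 -> q1 = q2) -> card_le S #|T|.
Proof.
move=> finj s us sS.
have finj_s : {in s &, injective f} by move=> q1 q2 /sS q1S /sS; apply: finj.
rewrite -(size_map f) -(card_uniqP (etrans (map_inj_in_uniq finj_s) us)).
exact: max_card.
Qed.

Theorem lemma5 (V : finType) (E : rel V) (w : V -> V -> nat) (l : nat) :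
  (forall x y, E x y -> 0 < w x y) ->
  0 < l ->
  min_unique E w l ->
  (forall u v : V, card_le (minpath E w (2 * l) u v) #|V|) /\
  card_le (fun q => exists u v : V, minpath E w (2 * l) u v q) (#|V| ^ 3).
Proof.
move=> _ _ uniq_l; split=> [u v|].
  by apply: (card_le_inj (f := mid_vertex l u)) => q1 q2; apply: minpath_mid_inj.
have [d _|V0] := pickP (@predT V); last first.
  by move=> [|q s] // _ /(_ q (mem_head _ _))[u _]; have := V0 u.
have -> : #|V| ^ 3 = #|{: V * V * V}| by rewrite !card_prod -!mulnA.
apply: (card_le_inj (f := fun q => (head d q, last d q, mid_vertex l d q))).
move=> q1 q2 [u1 [v1 q1min]] [u2 [v2 q2min]] [].
case: (q1min) (q2min) => /(is_path_ends d)[-> ->] _ _.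
case=> /(is_path_ends d)[-> ->] _ _ eq_u eq_v; subst u2 v2.
exact: minpath_mid_inj q1min q2min.
Qed.
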